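(* Let $d\geq 2$ and $U=(u_{ij})_{i,j=1}^d\in\mathcal{U}_d(\mathbb{C})$ be such that $$\min_i\max_j|u_{ij}|^2>\sqrt{\frac{1+\frac{1}{\sqrt d}}{2}}.$$ Then there are no $l\in\{1,\dots,d\}$ and $D_1,D_2\in\mathcal{DU}_d(\mathbb{C})$ such that $D_2U^\dagger D_1U|l\rangle$ is maximally mutually coherent; i.e., Alice and Bob cannot generate a maximally mutually coherent state with just three strokes of the coherence engine.
   Context: $\mathcal{U}_d(\mathbb{C})$ denotes the group of $d\times d$ unitary matrices and $\mathcal{DU}_d(\mathbb{C})$ its subgroup of diagonal unitary matrices; $\{|j\rangle\}$ is the computational basis (Alice's basis) and Bob's basis is $\{U^\dagger|j\rangle\}$. Alice's free operations are $\mathcal{DU}_d(\mathbb{C})$ and Bob's are $\{U^\dagger DU:D\in\mathcal{DU}_d(\mathbb{C})\}$; a three-stroke protocol consists of Alice preparing $|l\rangle$, Bob applying $U^\dagger D_1U$, Alice applying $D_2$. A pure state $|\psi\rangle$ is maximally mutually coherent if $|\langle j|\psi\rangle|=|\langle j|U|\psi\rangle|=1/\sqrt d$ for all $j$. *)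

(* complex numbers modelled as R[i] = complex R for an
   arbitrary real closed field R (this includes the real numbers). *)
From mathcomp Require Import all_boot all_order all_algebra.
From mathcomp Require Import complex.
Set Implicit Arguments. Unset Strict Implicit. Unset Printing Implicit Defensive.
Import Order.TTheory GRing.Theory Num.Theory ComplexField.
Local Open Scope ring_scope.

Section Defs.
Variable R : rcfType.

Definition adjmx (m n : nat) (A : 'M[R[i]]_(m, n)) : 'M[R[i]]_(n, m) :=
  (map_mx (fun z => z^*) A)^T.

Definition unitary_mx (d : nat) (U : 'M[R[i]]_d) : Prop :=
  U *m adjmx U = 1%:M /\ adjmx U *m U = 1%:M.

Definition diag_unitary_mx (d : nat) (D : 'M[R[i]]_d) : Prop :=
  unitary_mx D /\ (forall i j : 'I_d, i != j -> D i j = 0).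

Definition ket (d : nat) (l : 'I_d) : 'cV[R[i]]_d := delta_mx l 0.

(* maximally mutually coherent pure state w.r.t. {|j>} and {U^dagger |j>}:
   |<j|psi>| = |<j|U|psi>| = 1/sqrt d for all j *)
Definition max_mut_coherent (d : nat) (U : 'M[R[i]]_d) (psi : 'cV[R[i]]_d) : Prop :=
  forall j : 'I_d,
    `|psi j 0| = 1 / sqrtC d%:R /\ `|(U *m psi) j 0| = 1 / sqrtC d%:R.
End Defs.

(* A three-stroke state is psi = D2 U^dagger D1 U |l>. If its moduli are all
   1/sqrt d, then z := D2^dagger psi satisfies U z = D1 U |l>, so comparing the
   i-th coordinates gives sqrt d |u_il| <= sum_j |u_ij|. Together with
   Cauchy-Schwarz on the remaining d - 1 entries of the unit row i this forces
   |u_il|^2 <= (1 + 1/sqrt d)/2 for every row i. On the other hand, a threshold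
   c >= 1/2 exceeded by an entry in every row is exceeded in every column as
   well: the heavy entries of two rows cannot share a column of norm 1. With c
   the square root of (1 + 1/sqrt d)/2, some |u_il|^2 exceeds c, which is at
   least (1 + 1/sqrt d)/2. *)
From mathcomp Require Import all_boot all_order all_algebra.
From mathcomp Require Import complex ring.
Import Order.TTheory GRing.Theory Num.Theory ComplexField.
Local Open Scope ring_scope.
Set Implicit Arguments. Unset Strict Implicit.

Lemma sqr_sum_le_card_mul_sum_sqr (F : numFieldType) (I : finType) (P : pred I)
    (x : I -> F) :
  (forall i, 0 <= x i) ->
  (\sum_(i | P i) x i) ^+ 2 <= #|P|%:R * \sum_(i | P i) x i ^+ 2.
Proof.
move=> x_ge0; set s := \sum_(i | P i) x i; set Q := \sum_(i | P i) x i ^+ 2.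
have [P0 | P_gt0] := posnP #|P|.
  have -> : s = 0 by rewrite /s big_pred0 // => i; apply: (card0_eq P0).
  by rewrite expr0n /= P0 mul0r.
set n : F := #|P|%:R; have n_gt0 : 0 < n by rewrite ltr0n.
set m := s / n.
have variance : \sum_(i | P i) (x i - m) ^+ 2 = Q - s ^+ 2 / n.
  transitivity (\sum_(i | P i) (x i ^+ 2 - x i * (m *+ 2)) + \sum_(i | P i) m ^+ 2).
    by rewrite -big_split /=; apply: eq_bigr => i _; rewrite sqrrB; ring.
  rewrite sumrB -mulr_suml sumr_const -[_ *+ #|P|]mulr_natr -/s -/n -/Q /m.
  by field; rewrite lt0r_neq0.
have : 0 <= Q - s ^+ 2 / n.
  rewrite -variance; apply: sumr_ge0 => i _.
  by rewrite -real_normK ?exprn_ge0 // rpredB // ger0_real // divr_ge0 ?sumr_ge0 ?ltW.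
by rewrite subr_ge0 ler_pdivrMr // mulrC.
Qed.

Lemma sqr_le_half_1_plus_inv (F : numFieldType) (r p s : F) :
  1 < r -> 0 <= p -> p * r <= p + s -> s ^+ 2 <= (r ^+ 2 - 1) * (1 - p ^+ 2) ->
  p ^+ 2 <= (1 + r^-1) / 2.
Proof.
move=> r_gt1 p_ge0 le_pr le_s2.
have r1_gt0 : 0 < r - 1 by rewrite subr_gt0.
have r_gt0 : 0 < r by apply: lt_trans r_gt1.
have le_p_s : p * (r - 1) <= s by rewrite mulrBr mulr1 lerBlDl.
have pr1_ge0 : 0 <= p * (r - 1) by rewrite mulr_ge0 // ltW.
have : (r - 1) * (p ^+ 2 * (r - 1)) <= (r - 1) * ((r + 1) * (1 - p ^+ 2)).
  have -> : (r - 1) * (p ^+ 2 * (r - 1)) = (p * (r - 1)) ^+ 2 by ring.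
  have -> : (r - 1) * ((r + 1) * (1 - p ^+ 2)) = (r ^+ 2 - 1) * (1 - p ^+ 2) by ring.
  by apply: le_trans le_s2; rewrite !expr2 ler_pM.
rewrite ler_pM2l // -subr_ge0.
have -> : (r + 1) * (1 - p ^+ 2) - p ^+ 2 * (r - 1) = (r + 1) - p ^+ 2 * (r *+ 2).
  by rewrite -mulr_natr; ring.
rewrite subr_ge0 => le_p2_r1.
rewrite -(ler_pM2r (_ : 0 < r *+ 2)) ?mulrn_wgt0 // (le_trans le_p2_r1) //.
by rewrite le_eqVlt -mulr_natr; apply/orP; left; apply/eqP; field; rewrite lt0r_neq0.
Qed.

Lemma unit_vector_entry_sqr_le (F : numFieldType) (I : finType) (x : I -> F)
    (l : I) (r : F) :
  1 < r -> r ^+ 2 = #|I|%:R -> (forall i, 0 <= x i) -> \sum_i x i ^+ 2 = 1 ->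
  x l * r <= \sum_i x i -> x l ^+ 2 <= (1 + r^-1) / 2.
Proof.
move=> r_gt1 r2 x_ge0 norm1 le_lr.
rewrite (bigD1 l) //= in le_lr.
apply: (sqr_le_half_1_plus_inv r_gt1 (x_ge0 l) le_lr).
apply: le_trans (sqr_sum_le_card_mul_sum_sqr _ x_ge0) _.
have -> : #|[pred j | j != l]| = #|I|.-1 by rewrite -(cardC1 l); apply: eq_card.
have -> : \sum_(j | j != l) x j ^+ 2 = 1 - x l ^+ 2.
  by rewrite -norm1 [in RHS](bigD1 l) //= addrC addrK.
by rewrite r2 -subn1 natrB //; apply/card_gt0P; exists l.
Qed.

Lemma half_1_plus_inv_bounds (F : numFieldType) (r : F) : 1 < r ->
  [/\ 0 <= (1 + r^-1) / 2, (1 + r^-1) / 2 <= 1 & 1 <= (1 + r^-1) / 2 *+ 2].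
Proof.
move=> r_gt1; have r_gt0 := lt_trans ltr01 r_gt1.
have r_inv_ge0 : 0 <= r^-1 by rewrite invr_ge0 ltW.
split; first by rewrite divr_ge0 ?addr_ge0.
  by rewrite ler_pdivrMr // mul1r (_ : 2 = 1 + 1) // lerD2l invf_le1 // ltW.
by rewrite mulr2n -splitr lerDl.
Qed.

Lemma sqrtC_ge_self (C : numClosedFieldType) (x : C) :
  0 <= x -> x <= 1 -> x <= sqrtC x.
Proof.
move=> x_ge0 x_le1.
rewrite -[x in x <= _]sqrtCK expr2 -[X in _ <= X]mulr1 ler_wpM2l ?sqrtC_ge0 //.
by rewrite -sqrtC1 ler_sqrtC ?qualifE /= ?ler01.
Qed.

Section UnitaryMatrices.
Variable R : rcfType.
Local Notation C := R[i].

Lemma adjmxE (m n : nat) (A : 'M[C]_(m, n)) i j : adjmx A i j = (A j i)^*.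
Proof. by rewrite !mxE. Qed.

Lemma unitary_row_norm d (U : 'M[C]_d) i :
  unitary_mx U -> \sum_j `|U i j| ^+ 2 = 1.
Proof.
case=> /(congr1 (fun M : 'M[C]_d => M i i)); rewrite !mxE eqxx /= => UU _.
rewrite -[RHS]UU.
by apply: eq_bigr => j _; rewrite adjmxE normCK.
Qed.

Lemma unitary_col_norm d (U : 'M[C]_d) j :
  unitary_mx U -> \sum_i `|U i j| ^+ 2 = 1.
Proof.
case=> _ /(congr1 (fun M : 'M[C]_d => M j j)); rewrite !mxE eqxx /= => UU.
rewrite -[RHS]UU.
by apply: eq_bigr => i _; rewrite adjmxE normCKC.
Qed.

Lemma diag_unitary_norm d (D : 'M[C]_d) j : diag_unitary_mx D -> `|D j j| = 1.
Proof.
case=> /(unitary_row_norm j) + D0.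
rewrite (bigD1 j) //= big1 ?addr0 => [D1|k kj].
  by apply/eqP; rewrite -sqrp_eq1 ?D1.
by rewrite D0 1?eq_sym // normr0 expr0n.
Qed.

Lemma mul_diag_mx_col d (D : 'M[C]_d) (v : 'cV[C]_d) i :
  diag_unitary_mx D -> (D *m v) i 0 = D i i * v i 0.
Proof.
case=> _ D0; rewrite mxE (bigD1 i) //= big1 ?addr0 // => k ki.
by rewrite D0 ?mul0r // eq_sym.
Qed.

Lemma unitary_heavy_entry_in_col d (U : 'M[C]_d) (c : C) :
  unitary_mx U -> 1 <= c *+ 2 -> (forall i, exists j, c < `|U i j| ^+ 2) ->
  forall l, exists i, c < `|U i l| ^+ 2.
Proof.
move=> hU c2_ge1 heavy; have [f hf] := fin_all_exists heavy.
have f_inj : injective f.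
  move=> i i' eq_f; apply/eqP/negP => /negP neq_ii'.
  have := unitary_col_norm (f i) hU.
  rewrite (bigD1 i) //= (bigD1 i') 1?eq_sym //= addrA => col1.
  have : 1 < `|U i (f i)| ^+ 2 + `|U i' (f i)| ^+ 2.
    by apply: le_lt_trans c2_ge1 _; rewrite mulr2n ltrD // eq_f.
  by rewrite -col1 => /lt_geF; rewrite lerDl sumr_ge0 // => k _; rewrite exprn_ge0.
have [g fK gK] := injF_bij f_inj.
by move=> l; exists (g l); rewrite -{2}(gK l).
Qed.

Lemma three_stroke_row_bound d (U D1 D2 : 'M[C]_d) (l i : 'I_d) :
  unitary_mx U -> diag_unitary_mx D1 -> diag_unitary_mx D2 ->
  max_mut_coherent U (D2 *m adjmx U *m D1 *m U *m ket R l) ->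
  `|U i l| * sqrtC d%:R <= \sum_j `|U i j|.
Proof.
move=> hU hD1 hD2 coh; set psi := D2 *m adjmx U *m D1 *m U *m ket R l.
set z := adjmx D2 *m psi.
have z_def : z = adjmx U *m (D1 *m (U *m ket R l)).
  by rewrite /z /psi !mulmxA (proj2 (proj1 hD2)) mul1mx.
have Uz : U *m z = D1 *m (U *m ket R l) by rewrite z_def mulmxA (proj1 hU) mul1mx.
have z_norm j : `|z j 0| = 1 / sqrtC d%:R.
  rewrite mxE (bigD1 j) //= big1 ?addr0 => [|k kj]; last first.
    by rewrite adjmxE (proj2 hD2) ?conjC0 ?mul0r.
  by rewrite normrM adjmxE norm_conjC diag_unitary_norm // (proj1 (coh j)) !mul1r.
have d_gt0 : 0 < sqrtC d%:R :> C.
  by rewrite sqrtC_gt0 ltr0n; apply: leq_ltn_trans (ltn_ord l).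
have -> : `|U i l| = `|(U *m z) i 0|.
  by rewrite Uz mul_diag_mx_col // normrM diag_unitary_norm // mul1r /ket -colE mxE.
rewrite -ler_pdivlMr // mxE (le_trans (ler_norm_sum _ _ _)) // mulr_suml.
by apply: ler_sum => j _; rewrite normrM z_norm mul1r.
Qed.

End UnitaryMatrices.

Theorem corollary15 (R : rcfType) (d : nat) (hd : (2 <= d)%N) (U : 'M[R[i]]_d) :
  unitary_mx U ->
  (* min_i max_j |u_ij|^2 > sqrt((1 + 1/sqrt d)/2), written as:
     for every row i some entry j has |u_ij|^2 above the bound *)
  (forall i : 'I_d, exists j : 'I_d,
      sqrtC ((1 + 1 / sqrtC d%:R) / 2) < `|U i j| ^+ 2) ->
  ~ (exists (l : 'I_d) (D1 D2 : 'M[R[i]]_d),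
       diag_unitary_mx D1 /\ diag_unitary_mx D2 /\
       max_mut_coherent U (D2 *m adjmx U *m D1 *m U *m ket R l)).
Proof.
move=> hU heavy [l [D1 [D2 [hD1 [hD2 coh]]]]].
have r_gt1 : 1 < sqrtC d%:R :> R[i].
  by rewrite -[X in X < _]sqrtC1 ltr_sqrtC ?qualifE /= ?ler01 ?ler0n // ltr1n.
move: heavy; rewrite mul1r; set t := (1 + _^-1) / 2 => heavy.
have [t_ge0 t_le1 t2_ge1] := half_1_plus_inv_bounds r_gt1.
have t_le_c := sqrtC_ge_self t_ge0 t_le1.
have c2_ge1 : 1 <= sqrtC t *+ 2 by apply: le_trans t2_ge1 _; rewrite !mulr2n lerD.
have [i c_lt] := unitary_heavy_entry_in_col hU c2_ge1 heavy l.
have le_t : `|U i l| ^+ 2 <= t.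
  apply: (@unit_vector_entry_sqr_le _ _ (fun j => `|U i j|) l _ r_gt1) => [|j||].
  - by rewrite sqrtCK card_ord.
  - exact: normr_ge0.
  - exact: unitary_row_norm.
  - exact: three_stroke_row_bound hU hD1 hD2 coh.
by move: (lt_geF (le_lt_trans t_le_c c_lt)); rewrite le_t.
Qed.
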